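(* Let $A\in\mathbb{R}^{n\times n}$, $B\in\mathbb{R}^{n\times m}$ and consider the system $x^+=Ax+Bu+d$ with disturbance $d\in\mathcal{D}$, where $\mathcal{D}:=\{\sum_{i=1}^{n_d}\alpha_i d^{(i)}:\mathbf{1}^\top\alpha=1,\ \alpha\ge0\}$ is a polyhedral C-set with vertices $d^{(1)},\dots,d^{(n_d)}\in\mathbb{R}^n$. Let $\mathrm{S}\in\mathbb{R}^{n_s\times n}$ be such that $\mathcal{S}:=\{x:\mathrm{S}x\le\mathbf{1}\}$ is a C-set, and $\mathrm{U}\in\mathbb{R}^{n_u\times m}$ with $\mathcal{U}:=\{u:\mathrm{U}u\le\mathbf{1}\}$ (a polyhedral convex set containing the origin in its interior). Let $u_d(0),\dots,u_d(T-1)$ be inputs, $d_d(0),\dots,d_d(T-1)\in\mathcal{D}$ (unknown) disturbances, and $x_d(0),\dots,x_d(T)$ states with $x_d(k+1)=Ax_d(k)+Bu_d(k)+d_d(k)$; set $U_{0,T}:=[u_d(0)\ \cdots\ u_d(T-1)]$, $X_{0,T}:=[x_d(0)\ \cdots\ x_d(T-1)]$, $X_{1,T}:=[x_d(1)\ \cdots\ x_d(T)]$. For $j\in\{1,\dots,T\}$ and $i\in\{1,\dots,n_d\}$ let $\delta_{ji}\in\mathbb{R}^{n\times T}$ be the matrix whose $j$-th column is $T d^{(i)}$ and all other columns are zero. If there exists $G_K\in\mathbb{R}^{T\times n}$ such that $\mathrm{S}\big((X_{1,T}-\delta_{ji})G_Ks+w\big)\le\mathbf{1}$ for all vertices $s$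 of $\mathcal{S}$, all vertices $w$ of $\mathcal{D}$, all $j\in\{1,\dots,T\}$ and all $i\in\{1,\dots,n_d\}$; $\;\mathrm{U}U_{0,T}G_Ks\le\mathbf{1}$ for all vertices $s$ of $\mathcal{S}$; and $I_n=X_{0,T}G_K$, then the state-feedback gain $K=U_{0,T}G_K$ is such that $\mathcal{S}$ is robustly invariant with respect to $\mathcal{D}$ for $x^+=(A+BK)x+d$ and $\mathcal{S}$ is admissible for $\mathcal{U}$.
   Context: $\mathbf{1}$ denotes the vector of all ones of appropriate dimension; inequalities between vectors/matrices are entrywise. A C-set is a convex compact subset of $\mathbb{R}^n$ containing the origin as an interior point. A set $\mathcal{S}$ is robustly invariant with respect to $\mathcal{D}$ for $x^+=Fx+d$ if for every initial condition $x(0)\in\mathcal{S}$ and every disturbance sequence with $d(t)\in\mathcal{D}$ for all $t\ge0$, the resulting solution satisfies $x(t)\in\mathcal{S}$ for all $t\ge0$. $\mathcal{S}$ is admissible for $\mathcal{U}$ (with gain $K$) if $Kx\in\mathcal{U}$ for every $x\in\mathcal{S}$. *)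

From HB Require Import structures.
From mathcomp Require Import all_boot all_order all_algebra.
From mathcomp Require Import all_classical all_reals all_analysis.
Set Implicit Arguments. Unset Strict Implicit. Unset Printing Implicit Defensive.
Import Order.TTheory GRing.Theory Num.Theory.
Import numFieldNormedType.Exports.
Local Open Scope classical_set_scope.
Local Open Scope ring_scope.

Definition mxle (R : realType) (p q : nat) (M N : 'M[R]_(p, q)) : Prop :=
  forall i j, M i j <= N i j.

Definition ones (R : realType) (p : nat) : 'cV[R]_p := const_mx 1.

Definition polyh (R : realType) (p n : nat) (H : 'M[R]_(p, n)) : set 'cV[R]_n :=
  [set x | mxle (H *m x) (ones R p)].

Definition conv_hull (R : realType) (n nd : nat) (d : 'I_nd -> 'cV[R]_n)
  : set 'cV[R]_n :=
  [set x | exists alpha : 'I_nd -> R,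
     (forall i, 0 <= alpha i) /\ \sum_(i < nd) alpha i = 1 /\
     x = \sum_(i < nd) alpha i *: d i].

Definition convex_set (R : realType) (n : nat) (C : set 'cV[R]_n) : Prop :=
  forall x y (t : R), C x -> C y -> 0 <= t <= 1 -> C (t *: x + (1 - t) *: y).

Definition Cset (R : realType) (n : nat) (C : set 'cV[R]_n) : Prop :=
  convex_set C /\ compact C /\ (interior C) 0.

Definition is_vertex (R : realType) (n : nat) (C : set 'cV[R]_n) (v : 'cV[R]_n)
  : Prop :=
  C v /\ forall y z (t : R), C y -> C z -> 0 < t < 1 ->
    v = t *: y + (1 - t) *: z -> y = v /\ z = v.

Fixpoint traj (R : realType) (n : nat) (F : 'M[R]_n) (x0 : 'cV[R]_n)
  (d : nat -> 'cV[R]_n) (t : nat) : 'cV[R]_n :=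
  match t with
  | 0 => x0
  | t'.+1 => F *m traj F x0 d t' + d t'
  end.

Definition robustly_invariant (R : realType) (n : nat) (S : set 'cV[R]_n)
  (F : 'M[R]_n) (D : set 'cV[R]_n) : Prop :=
  forall x0 (d : nat -> 'cV[R]_n), S x0 -> (forall t, D (d t)) ->
    forall t, S (traj F x0 d t).

Definition admissible (R : realType) (n m : nat) (S : set 'cV[R]_n)
  (U : set 'cV[R]_m) (K : 'M[R]_(m, n)) : Prop :=
  forall x, S x -> U (K *m x).

Definition datamx (R : realType) (p T s : nat) (v : nat -> 'cV[R]_p) : 'M[R]_(p, T) :=
  \matrix_(r < p, c < T) v (s + c)%N r 0.

(* delta_{ji}: j-th column equal to T d^(i), others zero (j is 0-based here) *)
Definition delta_ji (R : realType) (n T nd : nat) (d : 'I_nd -> 'cV[R]_n)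
  (j : 'I_T) (i : 'I_nd) : 'M[R]_(n, T) :=
  \matrix_(r < n, c < T) (if c == j then T%:R * d i r 0 else 0).

(* It suffices to check the vertices of the compact polyhedron S: a compact
   polyhedron lies in every convex set containing its vertices, because a
   non-vertex x moves in both directions along a line that keeps the
   constraints tight at x, and the two exit points, which have x between them,
   have strictly more tight constraints.  At a vertex s the data identity
   X1 = A X0 + B U0 + D0 together with X0 GK = I gives A + BK = (X1 - D0) GK.
   Writing each unknown d_d(j) as a convex combination of the vertices d^(i)
   with weights alpha_ji, the point (X1 - D0) GK s + w is the average, with
   weights alpha_ji / T, of the points (X1 - delta_ji) GK s + w, all of which
   lie in S by hypothesis. *)

From Pilot Require Import Defs.
From HB Require Import structures.
From mathcomp Require Import all_boot all_order all_algebra.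
From mathcomp Require Import all_classical all_reals all_analysis.
From mathcomp Require Import ring lra.
Set Implicit Arguments. Unset Strict Implicit. Unset Printing Implicit Defensive.
Import Order.TTheory GRing.Theory Num.Theory.
Import numFieldNormedType.Exports.
Local Open Scope classical_set_scope.
Local Open Scope ring_scope.

Lemma convex_comb_eq1 (R : realFieldType) (t a b : R) :
  0 < t < 1 -> a <= 1 -> b <= 1 -> t * a + (1 - t) * b = 1 -> a = 1 /\ b = 1.
Proof. move=> /andP[t0 t1] a1 b1 e; split; nra. Qed.

Lemma convex_affine_preimage (R : realType) (n q : nat) (Q : set 'cV[R]_q)
    (M : 'M[R]_(q, n)) (w : 'cV[R]_q) :
  Defs.convex_set Q -> Defs.convex_set [set x | Q (M *m x + w)].
Proof.
move=> convQ x y t Qx Qy t01 /=.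
have -> : M *m (t *: x + (1 - t) *: y) + w = t *: (M *m x + w) + (1 - t) *: (M *m y + w).
  by rewrite mulmxDr -!scalemxAr !scalerDr addrACA -scalerDl [t + _]addrC subrK scale1r.
exact: convQ.
Qed.

Section Polyhedron.
Variables (R : realType) (n p : nat) (H : 'M[R]_(p, n)).

Lemma polyhP x : polyh H x <-> forall r, (H *m x) r 0 <= 1.
Proof.
rewrite /polyh /mxle /=; split=> [Px r | Px r j].
  by have := Px r 0; rewrite [ones _ _ _ _]mxE.
by rewrite (ord1 j) [ones _ _ _ _]mxE.
Qed.

Lemma polyh0 : polyh H 0.
Proof. by apply/polyhP => r; rewrite mulmx0 mxE ler01. Qed.

Lemma polyh_sum (I : finType) (lam : I -> R) (y : I -> 'cV[R]_n) :
  (forall i, 0 <= lam i) -> \sum_i lam i = 1 -> (forall i, polyh H (y i)) ->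
  polyh H (\sum_i lam i *: y i).
Proof.
move=> lam_ge0 lam_sum1 Py; apply/polyhP => r.
rewrite mulmx_sumr summxE -lam_sum1; apply: ler_sum => i _.
rewrite -scalemxAr mxE -[leRHS]mulr1; apply: ler_wpM2l => //.
by move/polyhP: (Py i).
Qed.

Lemma polyh_conv_hull_addl nd (d : 'I_nd -> 'cV[R]_n) y w :
  (forall i, polyh H (y + d i)) -> conv_hull d w -> polyh H (y + w).
Proof.
move=> Pd [beta [beta_ge0 [beta_sum1 ->]]].
have -> : y + \sum_i beta i *: d i = \sum_i beta i *: (y + d i).
  by rewrite (eq_bigr _ (fun i _ => scalerDr _ _ _)) big_split /= -scaler_suml beta_sum1 scale1r.
exact: polyh_sum.
Qed.

Lemma convex_polyh : Defs.convex_set (polyh H).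
Proof.
move=> x y t Px Py /andP[t0 t1].
have := @polyh_sum bool (fun b => if b then t else 1 - t) (fun b => if b then x else y).
rewrite !big_bool /=; apply; first by case; rewrite ?subr_ge0.
  by rewrite addrC subrK.
by case.
Qed.

Lemma mulmx_rayE (x v : 'cV[R]_n) s r :
  (H *m (x + s *: v)) r 0 = (H *m x) r 0 + s * (H *m v) r 0.
Proof. by rewrite mulmxDr -scalemxAr !mxE. Qed.

Definition slack (x : 'cV[R]_n) : {set 'I_p} := [set r | (H *m x) r 0 < 1].

Lemma compact_polyh_exit (x v : 'cV[R]_n) : compact (polyh H) -> polyh H x -> v != 0 ->
  exists r, 0 < (H *m v) r 0.
Proof.
move=> /compact_bounded bdd /polyhP Px v_neq0.
apply: contrapT => /forallNP Hv_le0.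
have [M M_gt0 leM] := pinfty_ex_gt0 bdd.
have v_gt0 : 0 < `|v| by rewrite normr_gt0.
pose s := (M + `|x| + 1) / `|v|.
have s_ge0 : 0 <= s by rewrite divr_ge0 //; have := normr_ge0 x; lra.
have : polyh H (x + s *: v).
  apply/polyhP => r; rewrite mulmx_rayE.
  have : s * (H *m v) r 0 <= 0 by rewrite mulr_ge0_le0 // leNgt; apply/negP/Hv_le0.
  by have := Px r; lra.
move=> /leM /=; have := lerB_normD (s *: v) x.
by rewrite [s *: v + x]addrC normrZ ger0_norm // divfK ?gt_eqF //; lra.
Qed.

Lemma polyh_exit_ray (x v : 'cV[R]_n) r0 : polyh H x -> 0 < (H *m v) r0 0 ->
  (forall r, (H *m x) r 0 = 1 -> (H *m v) r 0 = 0) ->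
  exists2 s, 0 < s & polyh H (x + s *: v) /\ (#|slack (x + s *: v)| < #|slack x|)%N.
Proof.
move=> /polyhP Px Hv_r0 tight.
pose ratio r := (1 - (H *m x) r 0) / (H *m v) r 0.
have [r Hv_r min_r] := @arg_minP _ _ _ r0 (fun r => 0 < (H *m v) r 0) ratio Hv_r0.
have Hx_r : (H *m x) r 0 < 1.
  by rewrite lt_neqAle Px andbT; apply: contraTneq Hv_r => /tight ->; rewrite ltxx.
exists (ratio r); first by rewrite divr_gt0 // subr_gt0.
split.
  apply/polyhP => r'; rewrite mulmx_rayE; have [Hv_r'|] := ltrP 0 ((H *m v) r' 0).
    have := min_r r' Hv_r'; rewrite -(ler_pM2r Hv_r') /ratio divfK ?gt_eqF //; lra.
  have : 0 <= ratio r by rewrite divr_ge0 ?subr_ge0 ?ltW.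
  by move=> ratio_ge0 /(mulr_ge0_le0 ratio_ge0); have := Px r'; lra.
apply/proper_card/properP; split.
  apply/fintype.subsetP => r'; rewrite !inE mulmx_rayE => lt1.
  rewrite lt_neqAle Px andbT; apply: contraTneq lt1 => /[dup] /tight -> ->.
  by rewrite mulr0 addr0 ltxx.
by exists r; rewrite inE // mulmx_rayE /ratio divfK ?gt_eqF // addrC subrK ltxx.
Qed.

Lemma nonvertex_tight_direction (x : 'cV[R]_n) : polyh H x -> ~ is_vertex (polyh H) x ->
  exists2 v : 'cV[R]_n, v != 0 & forall r, (H *m x) r 0 = 1 -> (H *m v) r 0 = 0.
Proof.
move=> Px not_vertex.
have [y [z [t [Py Pz t01 x_eq yz_neq_x]]]] : exists y z (t : R),
    [/\ polyh H y, polyh H z, 0 < t < 1, x = t *: y + (1 - t) *: z & ~ (y = x /\ z = x)].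
  apply: contrapT => no_split; apply: not_vertex; split=> // y z t Py Pz t01 x_eq.
  by apply: contrapT => neq; apply: no_split; exists y, z, t.
exists (y - z).
  rewrite subr_eq0; apply/eqP => y_eq_z; apply: yz_neq_x; subst z x.
  by rewrite -scalerDl addrC subrK scale1r.
move=> r Hx_r.
have [Hy_r Hz_r] : (H *m y) r 0 = 1 /\ (H *m z) r 0 = 1.
  move/polyhP: Py => /(_ r) Hy_le1; move/polyhP: Pz => /(_ r) Hz_le1.
  apply: (convex_comb_eq1 t01 Hy_le1 Hz_le1).
  by rewrite -[RHS]Hx_r x_eq mulmxDr -!scalemxAr !mxE.
by rewrite mulmxBr mxE [X in _ + X]mxE Hy_r Hz_r subrr.
Qed.

Lemma compact_polyh_sub_convex (Q : set 'cV[R]_n) :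
  compact (polyh H) -> Defs.convex_set Q ->
  (forall s, is_vertex (polyh H) s -> Q s) -> polyh H `<=` Q.
Proof.
move=> cptP convQ vertQ x; have [k] := ubnP #|slack x|.
elim: k x => // k IH x lt_x Px.
have [/vertQ //|not_vertex] := pselect (is_vertex (polyh H) x).
have [v v_neq0 tight] := nonvertex_tight_direction Px not_vertex.
have tightN r : (H *m x) r 0 = 1 -> (H *m - v) r 0 = 0.
  by move/tight => Hv_r; rewrite mulmxN [LHS]mxE Hv_r oppr0.
have [r1 Hv_r1] := compact_polyh_exit cptP Px v_neq0.
have [r2 Hv_r2] : exists r, 0 < (H *m - v) r 0.
  by apply: compact_polyh_exit cptP Px _; rewrite oppr_eq0.
have [s1 s1_gt0 [P1 lt1]] := polyh_exit_ray Px Hv_r1 tight.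
have [s2 s2_gt0 [P2 lt2]] := polyh_exit_ray Px Hv_r2 tightN.
pose mu := s2 / (s1 + s2).
have -> : x = mu *: (x + s1 *: v) + (1 - mu) *: (x + s2 *: - v).
  by apply/matrixP => i j; rewrite !mxE /mu; field; rewrite gt_eqF ?addr_gt0.
apply: convQ; [apply: IH P1 | apply: IH P2 |].
- by rewrite (leq_trans lt1) // -ltnS.
- by rewrite (leq_trans lt2) // -ltnS.
- apply/andP; split; first by apply: divr_ge0; apply: ltW; last exact: addr_gt0.
  by rewrite ler_pdivrMr ?addr_gt0 // mul1r lerDr ltW.
Qed.

End Polyhedron.

Section DataDriven.
Variables (R : realType) (n m nd T : nat).
Implicit Types (xd dd : nat -> 'cV[R]_n) (ud : nat -> 'cV[R]_m).

Lemma mulmx_inner0 p q (X : 'M[R]_(p, T)) (Y : 'M[R]_(T, q)) : T = 0%N -> X *m Y = 0.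
Proof.
move=> T0; apply/matrixP => i j; rewrite !mxE big1 // => k _.
by have := ltn_ord k; rewrite [X in (_ < X)%N]T0.
Qed.

Lemma datamx_shift (A : 'M[R]_n) (B : 'M[R]_(n, m)) ud dd xd :
  (forall k, (k < T)%N -> xd k.+1 = A *m xd k + B *m ud k + dd k) ->
  datamx T 1 xd = A *m datamx T 0 xd + B *m datamx T 0 ud + datamx T 0 dd.
Proof.
move=> xd_step; apply/matrixP => r c.
rewrite !mxE add1n xd_step // !mxE add0n.
by congr (_ + _ + _); apply: eq_bigr => k _; rewrite !mxE add0n.
Qed.

Lemma closed_loop_datamx (A : 'M[R]_n) (B : 'M[R]_(n, m)) ud dd xd (GK : 'M[R]_(T, n)) :
  (forall k, (k < T)%N -> xd k.+1 = A *m xd k + B *m ud k + dd k) ->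
  1%:M = datamx T 0 xd *m GK ->
  A + B *m (datamx T 0 ud *m GK) = (datamx T 1 xd - datamx T 0 dd) *m GK.
Proof.
move=> /datamx_shift -> GK_rinv.
by rewrite addrK mulmxDl -!mulmxA -GK_rinv mulmx1.
Qed.

Lemma datamx_mulE (v : nat -> 'cV[R]_n) (g : 'cV[R]_T) :
  datamx T 0 v *m g = \sum_(j < T) g j 0 *: v j.
Proof.
apply/matrixP => r c; rewrite (ord1 c) mxE summxE.
by apply: eq_bigr => j _; rewrite !mxE add0n mulrC.
Qed.

Lemma delta_ji_mul (d : 'I_nd -> 'cV[R]_n) (j : 'I_T) (i : 'I_nd) (g : 'cV[R]_T) :
  delta_ji d j i *m g = (T%:R * g j 0) *: d i.
Proof.
apply/matrixP => r c; rewrite (ord1 c) !mxE (bigD1 j) //= big1 ?addr0.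
  by rewrite !mxE eqxx mulrAC.
by move=> k /negbTE k_neq_j; rewrite !mxE k_neq_j mul0r.
Qed.

Lemma sum_avg_weights (alpha : 'I_T -> 'I_nd -> R) :
  (0 < T)%N -> (forall j, \sum_i alpha j i = 1) ->
  \sum_(p : 'I_T * 'I_nd) alpha p.1 p.2 / T%:R = 1.
Proof.
move=> T_gt0 alpha_sum1.
rewrite -(pair_bigA _ (fun j i => alpha j i / T%:R)) /=.
under eq_bigr => j _ do rewrite -mulr_suml alpha_sum1 mul1r.
by rewrite sumr_const card_ord -[LHS]mulr_natr mulVf // pnatr_eq0 -lt0n.
Qed.

Lemma datamx_conv_decomp (d : 'I_nd -> 'cV[R]_n) dd (alpha : 'I_T -> 'I_nd -> R)
    (X : 'M[R]_(n, T)) (g : 'cV[R]_T) (w : 'cV[R]_n) :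
  (0 < T)%N -> (forall j, \sum_i alpha j i = 1) ->
  (forall j : 'I_T, dd j = \sum_i alpha j i *: d i) ->
  (X - datamx T 0 dd) *m g + w =
  \sum_(p : 'I_T * 'I_nd) (alpha p.1 p.2 / T%:R) *: ((X - delta_ji d p.1 p.2) *m g + w).
Proof.
move=> T_gt0 alpha_sum1 dd_eq.
have T_neq0 : T%:R != 0 :> R by rewrite pnatr_eq0 -lt0n.
have weightT (a b : R) : a / T%:R * (T%:R * b) = a * b by field.
under eq_bigr do rewrite mulmxBl delta_ji_mul addrAC scalerBr scalerA weightT.
rewrite sumrB -scaler_suml sum_avg_weights // scale1r mulmxBl datamx_mulE addrAC.
congr (_ - _); rewrite -(pair_bigA _ (fun j i => (alpha j i * g j 0) *: d i)) /=.
apply: eq_bigr => j _; rewrite dd_eq scaler_sumr.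
by apply: eq_bigr => i _; rewrite scalerA mulrC.
Qed.

Lemma polyh_datamx_conv p (H : 'M[R]_(p, n)) (d : 'I_nd -> 'cV[R]_n) dd
    (X : 'M[R]_(n, T)) (g : 'cV[R]_T) (w : 'cV[R]_n) :
  (0 < T)%N -> (forall k, (k < T)%N -> conv_hull d (dd k)) ->
  (forall j i, polyh H ((X - delta_ji d j i) *m g + w)) ->
  polyh H ((X - datamx T 0 dd) *m g + w).
Proof.
move=> T_gt0 dd_conv P_delta.
have [alpha alphaP] := choice (fun j : 'I_T => dd_conv j (ltn_ord j)).
rewrite (datamx_conv_decomp X g w T_gt0 (fun j => (alphaP j).2.1) (fun j => (alphaP j).2.2)).
apply: polyh_sum => // [[j i]|]; last exact: sum_avg_weights (fun j => (alphaP j).2.1).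
by rewrite divr_ge0 // (alphaP j).1.
Qed.

End DataDriven.

Theorem proposition1 (R : realType) (n m nd ns nu T : nat)
  (A : 'M[R]_n) (B : 'M[R]_(n, m))
  (d : 'I_nd -> 'cV[R]_n) (Smx : 'M[R]_(ns, n)) (Umx : 'M[R]_(nu, m))
  (ud : nat -> 'cV[R]_m) (dd : nat -> 'cV[R]_n) (xd : nat -> 'cV[R]_n)
  (GK : 'M[R]_(T, n)) :
  Cset (conv_hull d) ->
  (forall i, is_vertex (conv_hull d) (d i)) ->
  Cset (polyh Smx) ->
  (forall k, (k < T)%N -> conv_hull d (dd k)) ->
  (forall k, (k < T)%N -> xd k.+1 = A *m xd k + B *m ud k + dd k) ->
  (forall s w (j : 'I_T) (i : 'I_nd),
     is_vertex (polyh Smx) s -> is_vertex (conv_hull d) w ->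
     mxle (Smx *m ((datamx T 1 xd - delta_ji d j i) *m GK *m s + w)) (ones R ns)) ->
  (forall s, is_vertex (polyh Smx) s ->
     mxle (Umx *m (datamx T 0 ud *m GK *m s)) (ones R nu)) ->
  1%:M = datamx T 0 xd *m GK ->
  robustly_invariant (polyh Smx) (A + B *m (datamx T 0 ud *m GK)) (conv_hull d) /\
  admissible (polyh Smx) (polyh Umx) (datamx T 0 ud *m GK).
Proof.
move=> _ d_vertex [_ [cptS _]] dd_conv xd_step vertex_succ vertex_adm GK_rinv.
set K := datamx T 0 ud *m GK.
(* Without data, X0 GK = I forces the state space to be trivial. *)
have [T0|T_gt0] := posnP T.
  have vec_eq0 (x : 'cV[R]_n) : x = 0.
    by rewrite -[x]mul1mx GK_rinv -mulmxA mulmx_inner0.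
  split=> [x0 dist _ _ t | x _]; last by rewrite (vec_eq0 x) mulmx0; apply: polyh0.
  by rewrite (vec_eq0 (traj _ _ _ t)); apply: polyh0.
have succ_vertex s w : is_vertex (polyh Smx) s -> conv_hull d w ->
    polyh Smx ((A + B *m K) *m s + w).
  move=> s_vertex; apply: polyh_conv_hull_addl => i.
  rewrite (closed_loop_datamx xd_step GK_rinv) -mulmxA.
  apply: (polyh_datamx_conv T_gt0 dd_conv) => j i'.
  by rewrite mulmxA; apply: vertex_succ s_vertex (d_vertex i).
have succ_in x w : polyh Smx x -> conv_hull d w -> polyh Smx ((A + B *m K) *m x + w).
  move=> Sx Dw.
  apply: (@compact_polyh_sub_convex _ _ _ _ [set y | polyh Smx ((A + B *m K) *m y + w)] cptS) Sx.
    by apply: convex_affine_preimage; apply: convex_polyh.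
  by move=> s /succ_vertex/(_ Dw).
split; first by move=> x0 dist Sx0 dist_in; elim=> //= t IH; apply: succ_in.
move=> x Sx; suff : polyh (Umx *m K) x by rewrite /polyh /= mulmxA.
apply: (@compact_polyh_sub_convex _ _ _ _ (polyh (Umx *m K)) cptS) Sx.
  exact: convex_polyh.
by move=> s /vertex_adm; rewrite /polyh /= mulmxA.
Qed.
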